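(* Let $x,y\in\mathcal{Q}^\pi$. Then $(q_n^{(x+y)})$ converges in $(\mathcal D,d)$ if and only if $(q_n^{(x,y)})$ converges in $(\mathcal D,d)$. In this case $x+y\in\mathcal Q^\pi$ and $\lim_n q_n^{(x,y)}=\tfrac12\big([x+y]_\pi-[x]_\pi-[y]_\pi\big)$.
   Context: Let $\pi=(\pi_n)_{n\ge1}$ be a sequence of partitions $\pi_n=(t^n_0,\dots,t^n_{k_n})$ with $0=t^n_0<\dots<t^n_{k_n}<\infty$, $t^n_{k_n}\uparrow\infty$, and mesh tending to $0$ on compacts; sums over $i$ run over $0\le i<k_n$. $\mathcal D$ is the space of càdlàg functions $[0,\infty)\to\mathbb R$ with a metric $d$ inducing the Skorokhod $J_1$ topology. For $u,v,w\in\mathcal D$: $q_n^{(u,v)}(t)=\sum_{i:\,t^n_i\le t}(u(t^n_{i+1})-u(t^n_i))(v(t^n_{i+1})-v(t^n_i))$ and $q_n^{(w)}=q_n^{(w,w)}$. $\mathcal Q^\pi$ is the set of $w\in\mathcal D$ such that $(q_n^{(w)})$ converges in $(\mathcal D,d)$, and for such $w$, $[w]_\pi:=\lim_n q_n^{(w)}$ in $(\mathcal D,d)$. *)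

From Stdlib Require Import Reals Lra List.
Import ListNotations.
Open Scope R_scope.

(* A sequence of partitions pi = (pi_n): pi_n = (t n 0, ..., t n (k n)). *)
Record partition_seq := {
  pk : nat -> nat;
  pt : nat -> nat -> R
}.

Definition valid_partition_seq (p : partition_seq) : Prop :=
  (forall n, pt p n 0 = 0) /\
  (forall n i, (i < pk p n)%nat -> pt p n i < pt p n (S i)) /\
  (forall n, pt p n (pk p n) <= pt p (S n) (pk p (S n))) /\
  (forall M, exists n, M < pt p n (pk p n)) /\
  (forall T, 0 <= T -> forall eps, 0 < eps -> exists N, forall n, (N <= n)%nat ->
     forall i, (i < pk p n)%nat -> pt p n i <= T ->
       pt p n (S i) - pt p n i < eps).

Definition cadlag (f : R -> R) : Prop :=
  (forall t, 0 <= t -> forall eps, 0 < eps -> exists delta, 0 < delta /\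
     forall s, t <= s < t + delta -> Rabs (f s - f t) < eps) /\
  (forall t, 0 < t -> exists l, forall eps, 0 < eps -> exists delta, 0 < delta /\
     forall s, t - delta < s < t -> Rabs (f s - l) < eps).

Definition qn (p : partition_seq) (u v : R -> R) (n : nat) (t : R) : R :=
  fold_right Rplus 0
    (map (fun i => if Rle_dec (pt p n i) t then
                     (u (pt p n (S i)) - u (pt p n i)) *
                     (v (pt p n (S i)) - v (pt p n i))
                   else 0)
         (seq 0 (pk p n))).

Definition time_change (lam : R -> R) : Prop :=
  lam 0 = 0 /\
  (forall s t, 0 <= s -> s < t -> lam s < lam t) /\
  (forall t, 0 <= t -> continuity_pt lam t) /\
  (forall M, exists t, 0 <= t /\ M < lam t).

(* Convergence in (D, d), d any metric inducing the Skorokhod J1 topology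
   (characterization of Jacod--Shiryaev, Thm VI.1.14(b)). *)
Definition J1_converges (u : nat -> R -> R) (f : R -> R) : Prop :=
  cadlag f /\
  exists lam : nat -> R -> R,
    (forall n, time_change (lam n)) /\
    (forall eps, 0 < eps -> exists N, forall n, (N <= n)%nat ->
       forall s, 0 <= s -> Rabs (lam n s - s) <= eps) /\
    (forall T, 0 <= T -> forall eps, 0 < eps -> exists N, forall n, (N <= n)%nat ->
       forall s, 0 <= s <= T -> Rabs (u n (lam n s) - f s) <= eps).

Definition in_Q (p : partition_seq) (w : R -> R) : Prop :=
  cadlag w /\ exists L, J1_converges (qn p w w) L.

From Stdlib Require Import Reals Lra Lia Arith List ClassicalEpsilon Classical.
Open Scope R_scope.

(* J1 convergence is not additive: q_n^(x,x), q_n^(y,y) and q_n^(x,y) may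
   each need their own time changes, so the polarisation identity
   q_n^(x+y) = q_n^(x) + q_n^(y) + 2 q_n^(x,y) cannot be passed to the limit
   directly.  The way out is a single sequence of time changes lam_n, built
   from x, y and pi alone, along which every J1-convergent q_n^(f,g)
   converges locally uniformly, as soon as (f, g) is left-continuous wherever
   (x, y) is.  Since q_n^(f,g) only moves at partition points, any time
   changes realising its J1 convergence must eventually send each jump time
   of the limit to the left end t^n_j of its cell, and such a jump time is a
   left discontinuity of (x, y).  lam_n is piecewise linear and sends a node
   of each cell to t^n_j, the node being the largest left jump of (x, y) in
   the cell, which for fine partitions is the jump in question.  Locally
   uniform convergence along a fixed lam_n is linear and has unique limits,
   which gives both directions and the formula. *)

Fixpoint rsum (F : nat -> R) (m : nat) : R :=
  match m with O => 0 | S m' => rsum F m' + F m' end.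

Lemma fold_right_Rplus_map_seq (F : nat -> R) (m : nat) :
  fold_right Rplus 0 (map F (seq 0 m)) = rsum F m.
Proof.
  assert (shift : forall (l : list R) c, fold_right Rplus c l = c + fold_right Rplus 0 l).
  { induction l as [|a l IH]; intros c; simpl; [lra | rewrite IH; lra]. }
  induction m as [|m IH]; [reflexivity|].
  rewrite seq_S, map_app, fold_right_app; simpl.
  rewrite shift, IH; lra.
Qed.

Lemma rsum_ext (F G : nat -> R) (m : nat) :
  (forall j, (j < m)%nat -> F j = G j) -> rsum F m = rsum G m.
Proof.
  induction m as [|m IH]; intros H; simpl; [reflexivity|].
  rewrite IH, H; [reflexivity | lia | intros; apply H; lia].
Qed.

Lemma rsum_plus (F G : nat -> R) (m : nat) :
  rsum (fun j => F j + G j) m = rsum F m + rsum G m.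
Proof. induction m; simpl; lra. Qed.

Lemma rsum_scal (c : R) (F : nat -> R) (m : nat) :
  rsum (fun j => c * F j) m = c * rsum F m.
Proof. induction m as [|m IH]; simpl; [lra | rewrite IH; lra]. Qed.

Lemma rsum_minus (F G : nat -> R) (m : nat) :
  rsum (fun j => F j - G j) m = rsum F m - rsum G m.
Proof. induction m; simpl; lra. Qed.

Lemma rsum_telescope (t : nat -> R) (m : nat) : rsum (fun j => t (S j) - t j) m = t m - t O.
Proof. induction m; simpl; lra. Qed.

Lemma rsum_split (F G : nat -> R) (i m : nat) : (i < m)%nat ->
  (forall j, (j < i)%nat -> F j = G j) ->
  (forall j, (i < j)%nat -> (j < m)%nat -> F j = 0) ->
  rsum F m = rsum G i + F i.
Proof.
  induction m as [|m IH]; intros Him HG HZ; [lia|]. simpl.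
  destruct (Nat.eq_dec i m) as [->|Hne].
  - rewrite (rsum_ext F G); auto.
  - rewrite IH, (HZ m); [lra | lia | lia | lia | auto | intros; apply HZ; lia].
Qed.

Lemma rsum_single (F : nat -> R) (i m : nat) : (i < m)%nat ->
  (forall j, (j < m)%nat -> j <> i -> F j = 0) -> rsum F m = F i.
Proof.
  intros Him H.
  assert (Hz : forall m', (m' <= i)%nat -> rsum F m' = 0).
  { induction m' as [|m' IH]; intros Hm'; simpl; [reflexivity|].
    rewrite IH, H by lia; lra. }
  rewrite (rsum_split F F i m); auto; [rewrite Hz by lia; lra | intros; apply H; lia].
Qed.

Lemma rsum_nonneg (F : nat -> R) (m : nat) :
  (forall j, (j < m)%nat -> 0 <= F j) -> 0 <= rsum F m.
Proof.
  induction m as [|m IH]; intros H; simpl; [lra|].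
  assert (0 <= F m) by (apply H; lia).
  assert (0 <= rsum F m) by (apply IH; intros; apply H; lia).
  lra.
Qed.

Lemma rsum_weighted_pos (w d : nat -> R) (m : nat) :
  (forall j, (j < m)%nat -> 0 < w j) -> (forall j, (j < m)%nat -> 0 <= d j) ->
  0 < rsum d m -> 0 < rsum (fun j => w j * d j) m.
Proof.
  induction m as [|m IH]; intros Hw Hd Hs; simpl in *; [lra|].
  assert (Hwm : 0 < w m) by (apply Hw; lia).
  assert (Hdm : 0 <= d m) by (apply Hd; lia).
  assert (Hwd : 0 <= rsum (fun j => w j * d j) m).
  { apply rsum_nonneg; intros j Hj.
    assert (0 < w j) by (apply Hw; lia). assert (0 <= d j) by (apply Hd; lia).
    apply Rmult_le_pos; lra. }
  destruct (Rlt_or_le 0 (rsum d m)) as [Hpos|Hz].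
  - assert (0 < rsum (fun j => w j * d j) m)
      by (apply IH; [intros; apply Hw; lia | intros; apply Hd; lia | exact Hpos]).
    assert (0 <= w m * d m) by (apply Rmult_le_pos; lra). lra.
  - assert (0 < w m * d m) by (apply Rmult_lt_0_compat; lra). lra.
Qed.

Lemma Rabs_le_inv (x e : R) : Rabs x <= e -> - e <= x <= e.
Proof. unfold Rabs; destruct Rcase_abs; lra. Qed.

Lemma eq_of_forall_dist_le (a b : R) : (forall e, 0 < e -> Rabs (a - b) <= e) -> a = b.
Proof.
  intros H. destruct (Req_dec a b) as [|Hne]; auto.
  assert (0 < Rabs (a - b)) by (apply Rabs_pos_lt; lra).
  specialize (H (Rabs (a - b) / 2) ltac:(lra)). lra.
Qed.

Lemma lipschitz_continuity_pt (f : R -> R) (K t : R) : 0 <= K ->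
  (forall a b, Rabs (f a - f b) <= K * Rabs (a - b)) -> continuity_pt f t.
Proof.
  intros HK H eps Heps. exists (eps / (K + 1)). split.
  - apply Rdiv_lt_0_compat; lra.
  - intros z [_ Hz]. simpl in *. unfold R_dist in *.
    apply Rle_lt_trans with (K * Rabs (z - t)); [apply H|].
    apply Rle_lt_trans with ((K + 1) * Rabs (z - t)).
    + apply Rmult_le_compat_r; [apply Rabs_pos | lra].
    + apply Rmult_lt_reg_l with (/ (K + 1)); [apply Rinv_0_lt_compat; lra|].
      rewrite <- Rmult_assoc, Rinv_l, Rmult_1_l by lra.
      rewrite Rmult_comm. exact Hz.
Qed.

Lemma eventually_uniform_on_compact (T : R) (P : nat -> R -> Prop) : 0 <= T ->
  (forall c, 0 <= c <= T -> exists d, 0 < d /\ exists N, forall n, (N <= n)%nat ->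
     forall s, 0 <= s <= T -> Rabs (s - c) < d -> P n s) ->
  exists N, forall n, (N <= n)%nat -> forall s, 0 <= s <= T -> P n s.
Proof.
  intros HT Hloc.
  set (E := fun a => 0 <= a <= T /\
    exists N, forall n, (N <= n)%nat -> forall s, 0 <= s <= a -> P n s).
  assert (HE0 : E 0).
  { split; [lra|]. destruct (Hloc 0) as [d [Hd [N HN]]]; [lra|].
    exists N. intros n Hn s Hs. apply HN; auto; [lra|].
    replace (s - 0) with 0 by lra. rewrite Rabs_R0; lra. }
  assert (Hb : bound E) by (exists T; intros a [Ha _]; lra).
  destruct (completeness E Hb (ex_intro _ 0 HE0)) as [c [Hub Hlub]].
  assert (Hc0 : 0 <= c) by (apply Hub; auto).
  assert (HcT : c <= T) by (apply Hlub; intros a [Ha _]; lra).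
  destruct (Hloc c) as [d [Hd [Nc HNc]]]; [lra|].
  assert (Ha : exists a, E a /\ c - d < a).
  { apply NNPP. intros Hn. assert (c <= c - d); [|lra].
    apply Hlub. intros a Ea. apply Rnot_lt_le. intros Hlt. apply Hn. eauto. }
  destruct Ha as [a [[Ha [Na HNa]] Hca]].
  set (b := Rmin (c + d / 2) T).
  assert (Hbc : b <= c + d / 2) by apply Rmin_l.
  assert (HbT : b <= T) by apply Rmin_r.
  assert (Eb : E b).
  { split; [unfold b, Rmin; destruct Rle_dec; lra|].
    exists (max Na Nc). intros n Hn s Hs.
    destruct (Rle_dec s a).
    - apply HNa; [lia | lra].
    - apply HNc; [lia | lra | apply Rabs_def1; lra]. }
  assert (b <= c) by (apply Hub; auto).
  assert (Hb' : b = T) by (unfold b, Rmin in *; destruct Rle_dec; lra).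
  destruct Eb as [_ [N HN]]. exists N. rewrite Hb' in HN. exact HN.
Qed.

(** * Left limits and càdlàg functions *)

Definition is_left_limit (f : R -> R) (t l : R) : Prop :=
  forall eps, 0 < eps -> exists d, 0 < d /\ forall s, t - d < s < t -> Rabs (f s - l) < eps.

Definition left_continuous (f : R -> R) (t : R) : Prop := is_left_limit f t (f t).

Lemma lincomb_close (a b eps : R) : 0 < eps -> exists eta, 0 < eta /\
  forall u1 u2 v1 v2, Rabs (u1 - v1) < eta -> Rabs (u2 - v2) < eta ->
    Rabs (a * u1 + b * u2 - (a * v1 + b * v2)) < eps.
Proof.
  intros He. pose proof (Rabs_pos a). pose proof (Rabs_pos b).
  exists (eps / (Rabs a + Rabs b + 1)). split; [apply Rdiv_lt_0_compat; lra|].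
  intros u1 u2 v1 v2 H1 H2.
  replace (a * u1 + b * u2 - (a * v1 + b * v2)) with (a * (u1 - v1) + b * (u2 - v2)) by ring.
  eapply Rle_lt_trans; [apply Rabs_triang|]. rewrite !Rabs_mult.
  set (eta := eps / (Rabs a + Rabs b + 1)) in *.
  assert (Heps : eps = eta * (Rabs a + Rabs b + 1)) by (unfold eta; field; lra).
  pose proof (Rabs_pos (u1 - v1)). pose proof (Rabs_pos (u2 - v2)).
  assert (0 < eta) by (unfold eta; apply Rdiv_lt_0_compat; lra).
  nra.
Qed.

Lemma is_left_limit_lincomb (a b : R) (f g h : R -> R) (t l1 l2 : R) :
  (forall s, h s = a * f s + b * g s) ->
  is_left_limit f t l1 -> is_left_limit g t l2 -> is_left_limit h t (a * l1 + b * l2).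
Proof.
  intros Eh H1 H2 eps He.
  destruct (lincomb_close a b eps He) as [eta [Heta Hc]].
  destruct (H1 eta Heta) as [d1 [Hd1 H1']]. destruct (H2 eta Heta) as [d2 [Hd2 H2']].
  exists (Rmin d1 d2). split; [apply Rmin_glb_lt; auto|].
  intros s Hs. pose proof (Rmin_l d1 d2). pose proof (Rmin_r d1 d2).
  rewrite Eh. apply Hc; [apply H1' | apply H2']; lra.
Qed.

Lemma left_continuous_plus (f g : R -> R) (t : R) :
  left_continuous f t -> left_continuous g t -> left_continuous (fun s => f s + g s) t.
Proof.
  intros Hf Hg. unfold left_continuous.
  replace (f t + g t) with (1 * f t + 1 * g t) by ring.
  apply (is_left_limit_lincomb 1 1 f g); auto. intros; ring.
Qed.

Lemma cadlag_lincomb (a b : R) (f g h : R -> R) :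
  (forall s, h s = a * f s + b * g s) -> cadlag f -> cadlag g -> cadlag h.
Proof.
  intros Eh [Rf Lf] [Rg Lg]. split.
  - intros t Ht eps He.
    destruct (lincomb_close a b eps He) as [eta [Heta Hc]].
    destruct (Rf t Ht eta Heta) as [d1 [Hd1 H1]]. destruct (Rg t Ht eta Heta) as [d2 [Hd2 H2]].
    exists (Rmin d1 d2). split; [apply Rmin_glb_lt; auto|].
    intros s Hs. pose proof (Rmin_l d1 d2). pose proof (Rmin_r d1 d2).
    rewrite !Eh. apply Hc; [apply H1 | apply H2]; lra.
  - intros t Ht. destruct (Lf t Ht) as [l1 H1]. destruct (Lg t Ht) as [l2 H2].
    exists (a * l1 + b * l2). exact (is_left_limit_lincomb a b f g h t l1 l2 Eh H1 H2).
Qed.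

Lemma cadlag_lincomb3 (a b c : R) (u v w : R -> R) :
  cadlag u -> cadlag v -> cadlag w -> cadlag (fun t => a * u t + b * v t + c * w t).
Proof.
  intros Cu Cv Cw.
  apply (cadlag_lincomb 1 c (fun t => a * u t + b * v t) w); auto; [intros; ring|].
  apply (cadlag_lincomb a b u v); auto.
Qed.

Lemma cadlag_increment_small (f : R -> R) (t0 eta : R) :
  cadlag f -> 0 < t0 -> 0 < eta -> exists d, 0 < d /\
  forall u1 u2, t0 - d < u1 -> u1 < u2 -> u2 < t0 + d ->
    (u2 < t0 \/ t0 <= u1 \/ left_continuous f t0) -> Rabs (f u2 - f u1) < 2 * eta.
Proof.
  intros [Rf Lf] Ht Heta.
  destruct (Rf t0 ltac:(lra) eta Heta) as [d1 [Hd1 H1]].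
  destruct (Lf t0 Ht) as [l Hl]. destruct (Hl eta Heta) as [d2 [Hd2 H2]].
  assert (Hstraddle : exists d3, 0 < d3 /\ (left_continuous f t0 ->
            forall v, t0 - d3 < v < t0 -> Rabs (f v - f t0) < eta)).
  { destruct (classic (left_continuous f t0)) as [HL|HnL].
    - destruct (HL eta Heta) as [d3 [Hd3 H3]]. exists d3. auto.
    - exists 1. split; [lra | contradiction]. }
  destruct Hstraddle as [d3 [Hd3 H3]].
  exists (Rmin d1 (Rmin d2 d3)). split; [repeat apply Rmin_glb_lt; auto|].
  pose proof (Rmin_l d1 (Rmin d2 d3)). pose proof (Rmin_r d1 (Rmin d2 d3)).
  pose proof (Rmin_l d2 d3). pose proof (Rmin_r d2 d3).
  intros u1 u2 Hu1 Hu12 Hu2 Hc.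
  destruct (Rlt_or_le u2 t0); [|destruct (Rlt_or_le u1 t0)].
  - destruct (Rabs_def2 _ _ (H2 u1 ltac:(lra))), (Rabs_def2 _ _ (H2 u2 ltac:(lra))).
    apply Rabs_def1; lra.
  - assert (HL : left_continuous f t0) by (destruct Hc as [|[|]]; auto; lra).
    destruct (Rabs_def2 _ _ (H3 HL u1 ltac:(lra))), (Rabs_def2 _ _ (H1 u2 ltac:(lra))).
    apply Rabs_def1; lra.
  - destruct (Rabs_def2 _ _ (H1 u1 ltac:(lra))), (Rabs_def2 _ _ (H1 u2 ltac:(lra))).
    apply Rabs_def1; lra.
Qed.

Lemma cadlag_continuity_or_jump (u : R -> R) (c eta : R) :
  cadlag u -> 0 <= c -> 0 < eta ->
  (exists d, 0 < d /\ forall s, 0 <= s -> Rabs (s - c) < d -> Rabs (u s - u c) < 3 * eta) \/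
  (0 < c /\ exists l, l <> u c /\ is_left_limit u c l).
Proof.
  intros [Ru Lu] Hc Heta.
  destruct (Ru c Hc eta Heta) as [dr [Hdr Hr]].
  destruct (Rle_lt_dec c 0) as [Hc0|Hc0].
  - left. exists dr. split; auto. intros s Hs Hsc.
    apply Rabs_def2 in Hsc. pose proof (Hr s ltac:(lra)). lra.
  - destruct (Lu c Hc0) as [l Hl].
    destruct (Rle_lt_dec (Rabs (l - u c)) (2 * eta)) as [Hsmall|Hbig].
    + left. destruct (Hl eta Heta) as [dl [Hdl Hl']].
      exists (Rmin dr dl). split; [apply Rmin_glb_lt; auto|].
      pose proof (Rmin_l dr dl). pose proof (Rmin_r dr dl).
      intros s Hs Hsc. apply Rabs_def2 in Hsc. destruct (Rlt_or_le s c).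
      * destruct (Rabs_def2 _ _ (Hl' s ltac:(lra))). apply Rabs_le_inv in Hsmall.
        apply Rabs_def1; lra.
      * pose proof (Hr s ltac:(lra)). lra.
    + right. split; auto. exists l. split; auto.
      intros ->. rewrite Rminus_diag, Rabs_R0 in Hbig. lra.
Qed.

Definition left_jump (x y : R -> R) (eta t : R) : Prop :=
  forall d, 0 < d -> exists v, t - d < v < t /\
    (eta <= Rabs (x v - x t) \/ eta <= Rabs (y v - y t)).

Lemma left_jump_anti (x y : R -> R) (eta eta' t : R) :
  left_jump x y eta t -> eta' <= eta -> left_jump x y eta' t.
Proof.
  intros H He d Hd. destruct (H d Hd) as [v [Hv Hor]]. exists v; split; auto; lra.
Qed.

Lemma not_left_continuous_left_jump (x y : R -> R) (t : R) :
  ~ (left_continuous x t /\ left_continuous y t) -> exists eta, 0 < eta /\ left_jump x y eta t.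
Proof.
  intros H. apply NNPP. intros Hno. apply H.
  assert (Hsmall : forall eps, 0 < eps -> exists d, 0 < d /\ forall v, t - d < v < t ->
            Rabs (x v - x t) < eps /\ Rabs (y v - y t) < eps).
  { intros eps He. apply NNPP. intros Hn. apply Hno. exists eps. split; auto.
    intros d Hd. apply NNPP. intros Hv. apply Hn. exists d. split; auto.
    intros v Hv'. split; apply Rnot_le_lt; intros Hle; apply Hv; exists v; auto. }
  split; intros eps He; destruct (Hsmall eps He) as [d [Hd Hd']];
    exists d; split; auto; intros v Hv; apply Hd'; auto.
Qed.

Lemma increment_product_small (f g : R -> R) (t0 e : R) :
  cadlag f -> cadlag g -> 0 < t0 -> 0 < e -> exists d, 0 < d /\
  forall u1 u2, t0 - d < u1 -> u1 < u2 -> u2 < t0 + d ->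
    (u2 < t0 \/ t0 <= u1 \/ (left_continuous f t0 /\ left_continuous g t0)) ->
    Rabs ((f u2 - f u1) * (g u2 - g u1)) < e.
Proof.
  intros Cf Cg Ht He. set (eta := Rmin 1 (e / 4)).
  assert (Heta : 0 < eta) by (unfold eta; apply Rmin_glb_lt; lra).
  assert (Heta1 : eta <= 1) by apply Rmin_l.
  assert (Heta2 : eta <= e / 4) by apply Rmin_r.
  destruct (cadlag_increment_small f t0 eta Cf Ht Heta) as [d1 [Hd1 H1]].
  destruct (cadlag_increment_small g t0 eta Cg Ht Heta) as [d2 [Hd2 H2]].
  exists (Rmin d1 d2). split; [apply Rmin_glb_lt; auto|].
  pose proof (Rmin_l d1 d2). pose proof (Rmin_r d1 d2).
  intros u1 u2 Hu1 Hu12 Hu2 Hc.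
  assert (A : Rabs (f u2 - f u1) < 2 * eta) by (apply H1; [lra | lra | lra | tauto]).
  assert (B : Rabs (g u2 - g u1) < 2 * eta) by (apply H2; [lra | lra | lra | tauto]).
  rewrite Rabs_mult. pose proof (Rabs_pos (f u2 - f u1)). pose proof (Rabs_pos (g u2 - g u1)).
  nra.
Qed.

Lemma left_jump_isolated (x y : R -> R) (t0 eta : R) :
  cadlag x -> cadlag y -> 0 < t0 -> 0 < eta -> exists d, 0 < d /\
  forall c, Rabs (c - t0) < d -> c <> t0 -> ~ left_jump x y eta c.
Proof.
  intros Cx Cy Ht He.
  destruct (cadlag_increment_small x t0 (eta / 2) Cx Ht ltac:(lra)) as [d1 [Hd1 H1]].
  destruct (cadlag_increment_small y t0 (eta / 2) Cy Ht ltac:(lra)) as [d2 [Hd2 H2]].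
  exists (Rmin d1 d2). split; [apply Rmin_glb_lt; auto|].
  pose proof (Rmin_l d1 d2). pose proof (Rmin_r d1 d2).
  intros c Hc Hne HJ. apply Rabs_def2 in Hc.
  (* pick the radius so that the witness [v] lies on the same side of [t0] as [c] *)
  assert (Hv : exists v, t0 - Rmin d1 d2 < v < c /\ (t0 <= v \/ c < t0) /\
                 (eta <= Rabs (x v - x c) \/ eta <= Rabs (y v - y c))).
  { destruct (Rlt_or_le t0 c).
    - destruct (HJ (c - t0) ltac:(lra)) as [v [Hv Hor]].
      exists v. split; [lra | split; [lra | auto]].
    - destruct (HJ (c - (t0 - Rmin d1 d2)) ltac:(lra)) as [v [Hv Hor]].
      exists v. split; [lra | split; [lra | auto]]. }
  destruct Hv as [v [Hv [Hside Hor]]].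
  assert (Ax : Rabs (x c - x v) < eta)
    by (replace eta with (2 * (eta / 2)) by field; apply H1; lra).
  assert (Ay : Rabs (y c - y v) < eta)
    by (replace eta with (2 * (eta / 2)) by field; apply H2; lra).
  rewrite Rabs_minus_sym in Ax, Ay. lra.
Qed.

(** * Time changes and convergence along them *)

Lemma time_change_le (lam : R -> R) (s s' : R) :
  time_change lam -> 0 <= s -> s <= s' -> lam s <= lam s'.
Proof.
  intros [_ [Hinc _]] Hs Hss. destruct (Req_dec s s') as [->|]; [lra|].
  left; apply Hinc; lra.
Qed.

Lemma time_change_nonneg (lam : R -> R) (s : R) : time_change lam -> 0 <= s -> 0 <= lam s.
Proof.
  intros Hl Hs. pose proof Hl as [H0 _]. rewrite <- H0. apply time_change_le; auto; lra.
Qed.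

Lemma time_change_lt_inv (lam : R -> R) (a b : R) :
  time_change lam -> 0 <= a -> 0 <= b -> lam a < lam b -> a < b.
Proof.
  intros Hl Ha Hb H. apply Rnot_le_lt. intros Hba.
  pose proof (time_change_le lam b a Hl Hb Hba). lra.
Qed.

Lemma time_change_le_inv (lam : R -> R) (a b : R) :
  time_change lam -> 0 <= a -> 0 <= b -> lam a <= lam b -> a <= b.
Proof.
  intros [_ [Hinc _]] Ha Hb H. apply Rnot_lt_le. intros Hba.
  pose proof (Hinc b a Hb Hba). lra.
Qed.

Lemma time_change_surj (lam : R -> R) (z : R) :
  time_change lam -> 0 <= z -> exists r, 0 <= r /\ lam r = z.
Proof.
  intros Hl Hz. pose proof Hl as [H0 [_ [Hc Hun]]].
  destruct (Req_dec z 0) as [->|Hz0]; [exists 0; split; auto; lra|].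
  destruct (Hun z) as [t0 [Ht0 Hzt]].
  assert (Ht0' : t0 <> 0) by (intros ->; lra).
  set (g := fun s => lam (Rmax s 0) - z).
  assert (Hg : continuity g).
  { intros s. unfold g. apply continuity_pt_minus; [|apply continuity_pt_const; intros ? ?; auto].
    apply (continuity_pt_comp (fun s => Rmax s 0) lam).
    - apply (lipschitz_continuity_pt _ 1); [lra|].
      intros a b. unfold Rmax. destruct (Rle_dec a 0), (Rle_dec b 0);
        unfold Rabs; repeat destruct Rcase_abs; lra.
    - apply Hc, Rmax_r. }
  destruct (IVT g 0 t0 Hg) as [r [Hr Hgr]]; unfold g; rewrite ?Rmax_left by lra; try lra.
  exists r. split; [lra|]. unfold g in Hgr. rewrite Rmax_left in Hgr by lra. lra.
Qed.

Definition skorokhod_seq (lam : nat -> R -> R) : Prop :=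
  (forall n, time_change (lam n)) /\
  (forall eps, 0 < eps -> exists N, forall n, (N <= n)%nat ->
     forall s, 0 <= s -> Rabs (lam n s - s) <= eps).

Definition converges_along (lam : nat -> R -> R) (U : nat -> R -> R) (u : R -> R) : Prop :=
  forall T, 0 <= T -> forall eps, 0 < eps -> exists N, forall n, (N <= n)%nat ->
    forall s, 0 <= s <= T -> Rabs (U n (lam n s) - u s) <= eps.

Lemma J1_converges_along (U : nat -> R -> R) (u : R -> R) :
  J1_converges U u <-> cadlag u /\ exists lam, skorokhod_seq lam /\ converges_along lam U u.
Proof.
  split.
  - intros [Cu [lam [H1 [H2 H3]]]]. split; [exact Cu|]. exists lam. split; [split|]; assumption.
  - intros [Cu [lam [[H1 H2] H3]]]. split; [exact Cu|]. exists lam. auto.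
Qed.

Lemma converges_along_lincomb3 (lam : nat -> R -> R) (U1 U2 U3 W : nat -> R -> R)
    (u1 u2 u3 : R -> R) (a b c : R) :
  (forall n s, W n s = a * U1 n s + b * U2 n s + c * U3 n s) ->
  converges_along lam U1 u1 -> converges_along lam U2 u2 -> converges_along lam U3 u3 ->
  converges_along lam W (fun s => a * u1 s + b * u2 s + c * u3 s).
Proof.
  intros EW H1 H2 H3 T HT e He.
  set (K := Rabs a + Rabs b + Rabs c + 1).
  assert (HK : 0 < K) by (unfold K; pose proof (Rabs_pos a); pose proof (Rabs_pos b);
                          pose proof (Rabs_pos c); lra).
  destruct (H1 T HT (e / K)) as [N1 HN1]; [apply Rdiv_lt_0_compat; lra|].
  destruct (H2 T HT (e / K)) as [N2 HN2]; [apply Rdiv_lt_0_compat; lra|].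
  destruct (H3 T HT (e / K)) as [N3 HN3]; [apply Rdiv_lt_0_compat; lra|].
  exists (max N1 (max N2 N3)). intros n Hn s Hs.
  specialize (HN1 n ltac:(lia) s Hs). specialize (HN2 n ltac:(lia) s Hs).
  specialize (HN3 n ltac:(lia) s Hs).
  rewrite EW.
  replace (a * U1 n (lam n s) + b * U2 n (lam n s) + c * U3 n (lam n s) -
           (a * u1 s + b * u2 s + c * u3 s))
    with (a * (U1 n (lam n s) - u1 s) + b * (U2 n (lam n s) - u2 s) +
          c * (U3 n (lam n s) - u3 s)) by ring.
  eapply Rle_trans; [apply Rabs_triang|].
  eapply Rle_trans; [apply Rplus_le_compat_r, Rabs_triang|].
  rewrite !Rabs_mult.
  assert (Hek : e = K * (e / K)) by (field; lra).
  assert (0 < e / K) by (apply Rdiv_lt_0_compat; lra).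
  set (q := e / K) in *. unfold K in Hek.
  pose proof (Rmult_le_compat_l _ _ _ (Rabs_pos a) HN1).
  pose proof (Rmult_le_compat_l _ _ _ (Rabs_pos b) HN2).
  pose proof (Rmult_le_compat_l _ _ _ (Rabs_pos c) HN3).
  lra.
Qed.

Lemma converges_along_unique (lam : nat -> R -> R) (U : nat -> R -> R) (u v : R -> R) :
  converges_along lam U u -> converges_along lam U v -> forall t, 0 <= t -> u t = v t.
Proof.
  intros Hu Hv t Ht. apply eq_of_forall_dist_le. intros e He.
  destruct (Hu t Ht (e / 2) ltac:(lra)) as [N1 HN1].
  destruct (Hv t Ht (e / 2) ltac:(lra)) as [N2 HN2].
  pose proof (Rabs_le_inv _ _ (HN1 (max N1 N2) ltac:(lia) t ltac:(lra))).
  pose proof (Rabs_le_inv _ _ (HN2 (max N1 N2) ltac:(lia) t ltac:(lra))).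
  apply Rabs_le; lra.
Qed.

Section Transfer.

Variables (mu lam : nat -> R -> R) (U : nat -> R -> R) (u : R -> R).
Hypotheses (Hmu : skorokhod_seq mu) (Hlam : skorokhod_seq lam) (HU : converges_along mu U u).

Lemma converges_along_transfer (T e d : R) : 0 <= T -> 0 < e -> 0 < d ->
  exists N, forall n, (N <= n)%nat -> forall s, 0 <= s <= T -> exists r, 0 <= r /\
    mu n r = lam n s /\ Rabs (r - s) <= d /\ Rabs (U n (lam n s) - u r) <= e.
Proof.
  intros HT He Hd. destruct Hmu as [Tmu Imu]. destruct Hlam as [Tlam Ilam].
  destruct (HU (T + d) ltac:(lra) e He) as [N1 HN1].
  destruct (Imu (d / 2) ltac:(lra)) as [N2 HN2].
  destruct (Ilam (d / 2) ltac:(lra)) as [N3 HN3].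
  exists (max N1 (max N2 N3)). intros n Hn s Hs.
  destruct (time_change_surj (mu n) (lam n s) (Tmu n)) as [r [Hr Hrs]].
  { apply time_change_nonneg; auto; lra. }
  pose proof (Rabs_le_inv _ _ (HN2 n ltac:(lia) r Hr)).
  pose proof (Rabs_le_inv _ _ (HN3 n ltac:(lia) s ltac:(lra))).
  exists r. split; [auto | split; [auto | split]].
  - apply Rabs_le; lra.
  - rewrite <- Hrs. apply HN1; [lia | lra].
Qed.

Lemma converges_along_near_continuity (T e c d1 : R) : 0 <= T -> 0 < e -> 0 < d1 ->
  (forall s, 0 <= s -> Rabs (s - c) < d1 -> Rabs (u s - u c) < 3 * e / 8) ->
  exists d, 0 < d /\ exists N, forall n, (N <= n)%nat ->
    forall s, 0 <= s <= T -> Rabs (s - c) < d -> Rabs (U n (lam n s) - u s) <= e.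
Proof.
  intros HT He Hd1 Hu.
  destruct (converges_along_transfer T (e / 8) (d1 / 2) HT ltac:(lra) ltac:(lra)) as [N HN].
  exists (d1 / 2). split; [lra|]. exists N. intros n Hn s Hs Hsc.
  destruct (HN n Hn s Hs) as [r [Hr [_ [Hrs Hq]]]].
  apply Rabs_le_inv in Hrs. apply Rabs_def2 in Hsc.
  destruct (Rabs_def2 _ _ (Hu r Hr ltac:(apply Rabs_def1; lra))).
  destruct (Rabs_def2 _ _ (Hu s ltac:(lra) ltac:(apply Rabs_def1; lra))).
  apply Rabs_le_inv in Hq. apply Rabs_le; lra.
Qed.

(* Where the two time changes eventually agree, monotonicity keeps the
   matching time [r] on the same side of [c] as [s], so only one-sided
   oscillations of [u] enter. *)
Lemma converges_along_near_agreement (T e c : R) :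
  cadlag u -> 0 <= T -> 0 < e -> 0 < c ->
  (exists N, forall n, (N <= n)%nat -> mu n c = lam n c) ->
  exists d, 0 < d /\ exists N, forall n, (N <= n)%nat ->
    forall s, 0 <= s <= T -> Rabs (s - c) < d -> Rabs (U n (lam n s) - u s) <= e.
Proof.
  intros [Ru Lu] HT He Hc [Na HNa].
  destruct (Ru c ltac:(lra) (e / 4) ltac:(lra)) as [dr [Hdr Hr]].
  destruct (Lu c Hc) as [l Hl]. destruct (Hl (e / 4) ltac:(lra)) as [dl [Hdl Hl']].
  set (d1 := Rmin dr dl).
  assert (Hd1 : 0 < d1) by (apply Rmin_glb_lt; auto).
  assert (Hd1r : d1 <= dr) by apply Rmin_l. assert (Hd1l : d1 <= dl) by apply Rmin_r.
  destruct (converges_along_transfer T (e / 2) (d1 / 2) HT ltac:(lra) ltac:(lra)) as [N HN].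
  exists (d1 / 2). split; [lra|]. exists (max N Na). intros n Hn s Hs Hsc.
  destruct (HN n ltac:(lia) s Hs) as [r [Hr0 [Hmr [Hrs Hq]]]].
  destruct Hmu as [Tmu _]. destruct Hlam as [Tlam _].
  apply Rabs_le_inv in Hrs, Hq. apply Rabs_def2 in Hsc.
  assert (Hur : Rabs (u r - u s) < e / 2).
  { destruct (Rle_dec c s).
    - assert (c <= r).
      { apply (time_change_le_inv (mu n)); auto; [lra|].
        rewrite Hmr, (HNa n ltac:(lia)). apply time_change_le; auto; lra. }
      destruct (Rabs_def2 _ _ (Hr r ltac:(lra))), (Rabs_def2 _ _ (Hr s ltac:(lra))).
      apply Rabs_def1; lra.
    - assert (r < c).
      { apply (time_change_lt_inv (mu n)); auto; [lra|].
        rewrite Hmr, (HNa n ltac:(lia)). destruct (Tlam n) as [_ [Hinc _]]. apply Hinc; lra. }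
      destruct (Rabs_def2 _ _ (Hl' r ltac:(lra))), (Rabs_def2 _ _ (Hl' s ltac:(lra))).
      apply Rabs_def1; lra. }
  apply Rabs_def2 in Hur. apply Rabs_le; lra.
Qed.

End Transfer.

(** * Partitions and discrete quadratic covariations *)

Definition cell_len (p : partition_seq) (n j : nat) : R := pt p n (S j) - pt p n j.

Definition qincr (p : partition_seq) (f g : R -> R) (n i : nat) : R :=
  (f (pt p n (S i)) - f (pt p n i)) * (g (pt p n (S i)) - g (pt p n i)).

Definition snaps_to_cell_start (p : partition_seq) (lam : nat -> R -> R) (t0 : R) : Prop :=
  exists N, forall n, (N <= n)%nat -> exists j, (j < pk p n)%nat /\
    pt p n j < t0 <= pt p n (S j) /\ lam n t0 = pt p n j.

Lemma qn_rsum (p : partition_seq) (f g : R -> R) (n : nat) (s : R) :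
  qn p f g n s = rsum (fun i => if Rle_dec (pt p n i) s then qincr p f g n i else 0) (pk p n).
Proof. unfold qn. rewrite fold_right_Rplus_map_seq. reflexivity. Qed.

Lemma qn_polarization (p : partition_seq) (x y : R -> R) (n : nat) (s : R) :
  qn p (fun t => x t + y t) (fun t => x t + y t) n s =
  qn p x x n s + qn p y y n s + 2 * qn p x y n s.
Proof.
  rewrite !qn_rsum, <- rsum_scal, <- !rsum_plus. apply rsum_ext. intros j _.
  unfold qincr. destruct Rle_dec; ring.
Qed.

Lemma finite_points_gap (L : nat -> R) (m : nat) (z : R) :
  exists w, w < z /\ forall i, (i < m)%nat -> L i < z -> L i < w.
Proof.
  induction m as [|m [w [Hw H]]]; [exists (z - 1); split; [lra | intros; lia]|].
  destruct (Rlt_dec (L m) z) as [Hm|Hm].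
  - exists (Rmax w ((L m + z) / 2)). split; [unfold Rmax; destruct Rle_dec; lra|].
    intros i Hi Hl. destruct (Nat.eq_dec i m) as [->|Hne].
    + eapply Rlt_le_trans; [|apply Rmax_r]. lra.
    + eapply Rlt_le_trans; [|apply Rmax_l]. apply H; auto; lia.
  - exists w. split; auto. intros i Hi Hl.
    destruct (Nat.eq_dec i m) as [->|Hne]; [lra | apply H; auto; lia].
Qed.

Section Partitions.

Variable p : partition_seq.
Hypothesis Hp : valid_partition_seq p.

Lemma pt_0 (n : nat) : pt p n 0 = 0.
Proof. destruct Hp as [H _]. apply H. Qed.

Lemma pt_step (n i : nat) : (i < pk p n)%nat -> pt p n i < pt p n (S i).
Proof. destruct Hp as [_ [H _]]. apply H. Qed.

Lemma mesh_vanishes (T eps : R) : 0 <= T -> 0 < eps -> exists N, forall n, (N <= n)%nat ->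
  forall j, (j < pk p n)%nat -> pt p n j <= T -> cell_len p n j < eps.
Proof. intros HT He. destruct Hp as [_ [_ [_ [_ H]]]]. exact (H T HT eps He). Qed.

Lemma pt_last_eventually_gt (s : R) : exists N, forall n, (N <= n)%nat -> s < pt p n (pk p n).
Proof.
  destruct Hp as [_ [_ [Hm [Hu _]]]]. destruct (Hu s) as [N HN]. exists N.
  intros n Hn. induction Hn as [|n Hn IH]; auto. specialize (Hm n). lra.
Qed.

Lemma pt_lt (n i m : nat) : (i < m)%nat -> (m <= pk p n)%nat -> pt p n i < pt p n m.
Proof.
  induction m as [|m IH]; intros Him Hm; [lia|].
  destruct (Nat.eq_dec i m) as [->|Hne]; [apply pt_step; lia|].
  apply Rlt_trans with (pt p n m); [apply IH; lia | apply pt_step; lia].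
Qed.

Lemma pt_le (n i m : nat) : (i <= m)%nat -> (m <= pk p n)%nat -> pt p n i <= pt p n m.
Proof.
  intros. destruct (Nat.eq_dec i m) as [->|]; [lra | left; apply pt_lt; lia].
Qed.

Lemma pt_nonneg (n i : nat) : (i <= pk p n)%nat -> 0 <= pt p n i.
Proof. intros. rewrite <- (pt_0 n). apply pt_le; lia. Qed.

Lemma cell_exists (n : nat) (s : R) : 0 < s -> s <= pt p n (pk p n) ->
  exists j, (j < pk p n)%nat /\ pt p n j < s <= pt p n (S j).
Proof.
  intros Hs HsT.
  assert (H : forall m, (m <= pk p n)%nat -> s <= pt p n m ->
            exists j, (j < m)%nat /\ pt p n j < s <= pt p n (S j)).
  { induction m as [|m IH]; intros Hm Hsm; [rewrite pt_0 in Hsm; lra|].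
    destruct (Rle_dec s (pt p n m)).
    - destruct IH as [j [Hj Hj2]]; [lia | auto | exists j; split; [lia | auto]].
    - exists m. split; [lia | lra]. }
  destruct (H (pk p n)) as [j [Hj Hj2]]; eauto.
Qed.

Lemma cell_unique (n : nat) (s : R) (j j' : nat) : (j < pk p n)%nat -> (j' < pk p n)%nat ->
  pt p n j < s <= pt p n (S j) -> pt p n j' < s <= pt p n (S j') -> j = j'.
Proof.
  intros Hj Hj' H1 H2. destruct (Nat.lt_total j j') as [Hlt|[Heq|Hlt]]; auto.
  - pose proof (pt_le n (S j) j' ltac:(lia) ltac:(lia)). lra.
  - pose proof (pt_le n (S j') j ltac:(lia) ltac:(lia)). lra.
Qed.

Lemma snaps_agree (mu lam : nat -> R -> R) (t0 : R) :
  snaps_to_cell_start p mu t0 -> snaps_to_cell_start p lam t0 ->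
  exists N, forall n, (N <= n)%nat -> mu n t0 = lam n t0.
Proof.
  intros [N1 H1] [N2 H2]. exists (max N1 N2). intros n Hn.
  destruct (H1 n ltac:(lia)) as [j1 [Hj1 [Hc1 E1]]].
  destruct (H2 n ltac:(lia)) as [j2 [Hj2 [Hc2 E2]]].
  rewrite E1, E2. f_equal. apply (cell_unique n t0); auto.
Qed.

Lemma qn_left_step (f g : R -> R) (n : nat) (z : R) :
  exists w, w < z /\ forall v, w <= v < z ->
    (exists i, (i < pk p n)%nat /\ pt p n i = z /\ qn p f g n z - qn p f g n v = qincr p f g n i) \/
    qn p f g n z - qn p f g n v = 0.
Proof.
  destruct (finite_points_gap (pt p n) (pk p n) z) as [w [Hw Hg]]. exists w. split; auto.
  intros v Hv. rewrite !qn_rsum.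
  assert (E : rsum (fun i => if Rle_dec (pt p n i) z then qincr p f g n i else 0) (pk p n) -
              rsum (fun i => if Rle_dec (pt p n i) v then qincr p f g n i else 0) (pk p n) =
              rsum (fun i => if Req_dec_T (pt p n i) z then qincr p f g n i else 0) (pk p n)).
  { rewrite <- rsum_minus. apply rsum_ext. intros j Hj.
    destruct (Req_dec_T (pt p n j) z) as [Hjz|Hjz];
      destruct (Rle_dec (pt p n j) z); destruct (Rle_dec (pt p n j) v); try lra.
    assert (pt p n j < w) by (apply Hg; auto; lra). lra. }
  rewrite E. destruct (classic (exists i, (i < pk p n)%nat /\ pt p n i = z)) as [[i [Hi Hiz]]|Hno].
  - left. exists i. split; [auto | split; auto]. rewrite (rsum_single _ i); auto.
    + destruct Req_dec_T; [auto | contradiction].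
    + intros j Hj Hji. destruct Req_dec_T as [Hjz|]; auto. exfalso.
      destruct (Nat.lt_total j i) as [H|[H|H]]; [|contradiction|].
      * pose proof (pt_lt n j i H ltac:(lia)). lra.
      * pose proof (pt_lt n i j H ltac:(lia)). lra.
  - right. rewrite (rsum_ext _ (fun _ => 0)); [clear; induction (pk p n); simpl; lra|].
    intros j Hj. destruct Req_dec_T; auto. exfalso; eauto.
Qed.

End Partitions.

Section JumpsOfTheLimit.

Variable p : partition_seq.
Hypothesis Hp : valid_partition_seq p.
Variables (f g u : R -> R) (mu : nat -> R -> R).
Hypotheses (Cf : cadlag f) (Cg : cadlag g).
Hypotheses (Hmu : skorokhod_seq mu) (HU : converges_along mu (qn p f g) u).

(* [qn] only moves at partition points, so the jump of [u] at [t0] must be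
   produced by one large increment at the partition point [mu n t0]. *)
Lemma limit_jump_large_increment (t0 l e : R) :
  0 < t0 -> is_left_limit u t0 l -> l <> u t0 -> 0 < e ->
  exists N, forall n, (N <= n)%nat -> exists j, (j < pk p n)%nat /\ mu n t0 = pt p n j /\
    Rabs (u t0 - l) / 2 <= Rabs (qincr p f g n j) /\
    Rabs (pt p n j - t0) <= e /\ cell_len p n j < e.
Proof.
  intros Ht0 Hl Hne He. set (a := Rabs (u t0 - l)).
  assert (Ha : 0 < a) by (apply Rabs_pos_lt; lra).
  destruct Hmu as [Tmu Imu].
  destruct (Hl (a / 8) ltac:(lra)) as [d1 [Hd1 H1]].
  destruct (HU (t0 + 1) ltac:(lra) (a / 8) ltac:(lra)) as [N1 HN1].
  destruct (Imu (Rmin e 1)) as [N2 HN2]; [apply Rmin_glb_lt; lra|].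
  destruct (mesh_vanishes p Hp (t0 + 1) e ltac:(lra) He) as [N3 HN3].
  exists (max N1 (max N2 N3)). intros n Hn.
  set (z := mu n t0).
  assert (Hz : Rabs (z - t0) <= Rmin e 1) by (apply HN2; [lia | lra]).
  pose proof (Rmin_l e 1). pose proof (Rmin_r e 1). apply Rabs_le_inv in Hz.
  destruct (qn_left_step p Hp f g n z) as [w [Hw Hstep]].
  set (s0 := Rmax (t0 - d1 / 2) (t0 / 2)).
  assert (Hs0 : t0 - d1 < s0 < t0 /\ 0 < s0) by (unfold s0, Rmax; destruct Rle_dec; lra).
  assert (Hms0 : mu n s0 < z) by (destruct (Tmu n) as [_ [Hinc _]]; apply Hinc; lra).
  pose proof (time_change_nonneg (mu n) s0 (Tmu n) ltac:(lra)).
  set (v := Rmax w (mu n s0)).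
  assert (Hv : w <= v < z /\ mu n s0 <= v) by (unfold v, Rmax; destruct Rle_dec; lra).
  destruct (time_change_surj (mu n) v (Tmu n)) as [r [Hr Hrv]]; [lra|].
  assert (Hrt : r < t0)
    by (apply (time_change_lt_inv (mu n)); [auto | lra | lra | rewrite Hrv; fold z; lra]).
  assert (Hrs : s0 <= r)
    by (apply (time_change_le_inv (mu n)); [auto | lra | lra | rewrite Hrv; lra]).
  assert (E1 := Rabs_le_inv _ _ (HN1 n ltac:(lia) r ltac:(lra))).
  assert (E2 := Rabs_le_inv _ _ (HN1 n ltac:(lia) t0 ltac:(lra))).
  assert (E3 := Rabs_def2 _ _ (H1 r ltac:(lra))).
  rewrite Hrv in E1. fold z in E2.
  assert (E4 : 5 * a / 8 <= Rabs (qn p f g n z - qn p f g n v)).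
  { assert (Hsign : a = u t0 - l \/ a = - (u t0 - l))
      by (unfold a, Rabs; destruct Rcase_abs; [right | left]; lra).
    destruct Hsign; unfold Rabs; destruct Rcase_abs; lra. }
  destruct (Hstep v ltac:(lra)) as [[i [Hi [Hiz Hd]]]|Hd]; rewrite Hd in E4.
  - exists i. split; [auto | split; [auto | split; [lra | split]]].
    + apply Rabs_le. lra.
    + apply HN3; [lia | auto | lra].
  - rewrite Rabs_R0 in E4. lra.
Qed.

Lemma limit_jump_snaps (t0 l : R) : 0 < t0 -> is_left_limit u t0 l -> l <> u t0 ->
  ~ (left_continuous f t0 /\ left_continuous g t0) /\ snaps_to_cell_start p mu t0.
Proof.
  intros Ht0 Hl Hne. set (a := Rabs (u t0 - l)).
  assert (Ha : 0 < a) by (apply Rabs_pos_lt; lra).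
  destruct (increment_product_small f g t0 (a / 2) Cf Cg Ht0 ltac:(lra)) as [d [Hd Hsmall]].
  destruct (limit_jump_large_increment t0 l (d / 2) Ht0 Hl Hne ltac:(lra)) as [N HN].
  (* a large increment close to [t0] must come from a cell straddling a
     left discontinuity of [(f, g)] at [t0] *)
  assert (Hstraddle : forall n, (N <= n)%nat -> exists j, (j < pk p n)%nat /\
            mu n t0 = pt p n j /\ pt p n j < t0 <= pt p n (S j) /\
            ~ (left_continuous f t0 /\ left_continuous g t0)).
  { intros n Hn. destruct (HN n Hn) as [j [Hj [Hz [Hinc [Hjt Hcell]]]]].
    exists j. split; [auto | split; [auto|]].
    apply Rabs_le_inv in Hjt. unfold cell_len in Hcell. pose proof (pt_step p Hp n j Hj).
    assert (Hnot : ~ (pt p n (S j) < t0 \/ t0 <= pt p n j \/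
                      (left_continuous f t0 /\ left_continuous g t0))).
    { intros Hor. pose proof (Hsmall (pt p n j) (pt p n (S j))
                                ltac:(lra) ltac:(lra) ltac:(lra) Hor).
      unfold qincr in Hinc. fold a in Hinc. lra. }
    split; [split|]; [apply Rnot_le_lt | apply Rnot_lt_le | ]; tauto. }
  split.
  - destruct (Hstraddle N (le_n N)) as [j [_ [_ [_ HnLC]]]]. exact HnLC.
  - exists N. intros n Hn. destruct (Hstraddle n Hn) as [j [Hj [Hz [Hc _]]]]. eauto.
Qed.

End JumpsOfTheLimit.

Lemma converges_along_of_J1 (p : partition_seq) (f g u : R -> R) (lam : nat -> R -> R) :
  valid_partition_seq p -> cadlag f -> cadlag g -> skorokhod_seq lam ->
  (forall t, 0 < t -> ~ (left_continuous f t /\ left_continuous g t) ->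
     snaps_to_cell_start p lam t) ->
  J1_converges (qn p f g) u -> converges_along lam (qn p f g) u.
Proof.
  intros Hp Cf Cg Hlam Hsnap HJ.
  apply J1_converges_along in HJ. destruct HJ as [Cu [mu [Hmu HU]]].
  intros T HT e He. apply eventually_uniform_on_compact; auto. intros c Hc.
  destruct (cadlag_continuity_or_jump u c (e / 8) Cu ltac:(lra) ltac:(lra))
    as [[d1 [Hd1 Hu1]] | [Hc0 [l [Hne Hl]]]].
  - apply (converges_along_near_continuity mu lam _ u Hmu Hlam HU T e c d1); auto.
    intros s Hs Hsc. specialize (Hu1 s Hs Hsc). lra.
  - destruct (limit_jump_snaps p Hp f g u mu Cf Cg Hmu HU c l Hc0 Hl Hne) as [HnLC Hsnap_mu].
    apply (converges_along_near_agreement mu lam _ u Hmu Hlam HU T e c); auto.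
    apply (snaps_agree p Hp); auto.
Qed.

(** * Piecewise-linear time changes *)

Definition clamp (s a b : R) : R := Rmin (Rmax s a) b.

(* Continuous and piecewise affine, sending [a j] to [t j - t 0] for [j <= k],
   with slope 1 beyond [a k]. *)
Definition pl_interp (a t : nat -> R) (k : nat) (s : R) : R :=
  rsum (fun j => (t (S j) - t j) / (a (S j) - a j) * (clamp s (a j) (a (S j)) - a j)) k
  + Rmax (s - a k) 0.

Lemma rsum_lipschitz (F : nat -> R -> R) (K : nat -> R) (m : nat) :
  (forall j, (j < m)%nat -> forall s s', Rabs (F j s - F j s') <= K j * Rabs (s - s')) ->
  forall s s', Rabs (rsum (fun j => F j s) m - rsum (fun j => F j s') m)
                <= rsum K m * Rabs (s - s').
Proof.
  induction m as [|m IH]; intros H s s'; simpl.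
  - rewrite Rminus_diag, Rabs_R0. lra.
  - replace (rsum (fun j => F j s) m + F m s - (rsum (fun j => F j s') m + F m s'))
      with ((rsum (fun j => F j s) m - rsum (fun j => F j s') m) + (F m s - F m s')) by ring.
    eapply Rle_trans; [apply Rabs_triang|].
    assert (IH' := IH (fun j Hj => H j ltac:(lia)) s s'). assert (Hm := H m ltac:(lia) s s').
    lra.
Qed.

Lemma clamp_below (s a b : R) : s <= a <= b -> clamp s a b = a.
Proof. intros. unfold clamp, Rmin, Rmax. repeat destruct Rle_dec; lra. Qed.

Lemma clamp_between (s a b : R) : a <= s <= b -> clamp s a b = s.
Proof. intros. unfold clamp, Rmin, Rmax. repeat destruct Rle_dec; lra. Qed.

Lemma clamp_above (s a b : R) : a <= b <= s -> clamp s a b = b.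
Proof. intros. unfold clamp, Rmin, Rmax. repeat destruct Rle_dec; lra. Qed.

Lemma clamp_lipschitz (s s' a b : R) : Rabs (clamp s a b - clamp s' a b) <= 1 * Rabs (s - s').
Proof.
  unfold clamp, Rmin, Rmax.
  repeat destruct Rle_dec; unfold Rabs; repeat destruct Rcase_abs; lra.
Qed.

Lemma clamp_monotone (s s' a b : R) : s <= s' -> clamp s a b <= clamp s' a b.
Proof. intros. unfold clamp, Rmin, Rmax. repeat destruct Rle_dec; lra. Qed.

Lemma pl_interp_continuity (a t : nat -> R) (k : nat) (s : R) : continuity_pt (pl_interp a t k) s.
Proof.
  set (slope := fun j => (t (S j) - t j) / (a (S j) - a j)).
  apply (lipschitz_continuity_pt _ (rsum (fun j => Rabs (slope j)) k + 1)).
  { pose proof (rsum_nonneg (fun j => Rabs (slope j)) k (fun j _ => Rabs_pos _)). lra. }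
  intros u v. unfold pl_interp.
  replace (rsum (fun j => (t (S j) - t j) / (a (S j) - a j) * (clamp u (a j) (a (S j)) - a j)) k
           + Rmax (u - a k) 0
           - (rsum (fun j => (t (S j) - t j) / (a (S j) - a j) * (clamp v (a j) (a (S j)) - a j)) k
              + Rmax (v - a k) 0))
    with ((rsum (fun j => slope j * (clamp u (a j) (a (S j)) - a j)) k
           - rsum (fun j => slope j * (clamp v (a j) (a (S j)) - a j)) k)
          + (Rmax (u - a k) 0 - Rmax (v - a k) 0)) by (unfold slope; ring).
  eapply Rle_trans; [apply Rabs_triang|]. rewrite Rmult_plus_distr_r, Rmult_1_l.
  apply Rplus_le_compat.
  - apply (rsum_lipschitz (fun j w => slope j * (clamp w (a j) (a (S j)) - a j))).
    intros j _ w w'.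
    replace (slope j * (clamp w (a j) (a (S j)) - a j) - slope j * (clamp w' (a j) (a (S j)) - a j))
      with (slope j * (clamp w (a j) (a (S j)) - clamp w' (a j) (a (S j)))) by ring.
    rewrite Rabs_mult. apply Rmult_le_compat_l; [apply Rabs_pos|].
    pose proof (clamp_lipschitz w w' (a j) (a (S j))). lra.
  - unfold Rmax. repeat destruct Rle_dec; unfold Rabs; repeat destruct Rcase_abs; lra.
Qed.

Section Interpolation.

Variables (a t : nat -> R) (k : nat).
Hypothesis Ha : forall j, (j < k)%nat -> a j < a (S j).

Lemma nodes_le (i m : nat) : (i <= m)%nat -> (m <= k)%nat -> a i <= a m.
Proof.
  intros Him Hm. induction m as [|m IH]; [replace i with O by lia; lra|].
  destruct (Nat.eq_dec i (S m)) as [->|]; [lra|].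
  apply Rle_trans with (a m); [apply IH; lia | left; apply Ha; lia].
Qed.

Lemma pl_interp_on_piece (i : nat) (s : R) : (i < k)%nat -> a i <= s <= a (S i) ->
  pl_interp a t k s = t i - t O + (t (S i) - t i) / (a (S i) - a i) * (s - a i).
Proof.
  intros Hi Hs. unfold pl_interp.
  rewrite (rsum_split _ (fun j => t (S j) - t j) i k Hi).
  - rewrite clamp_between by lra. rewrite rsum_telescope, Rmax_right; [ring|].
    pose proof (nodes_le (S i) k ltac:(lia) ltac:(lia)). lra.
  - intros j Hj. pose proof (Ha j ltac:(lia)). pose proof (nodes_le (S j) i ltac:(lia) ltac:(lia)).
    rewrite clamp_above by lra. field. lra.
  - intros j Hj Hjk. pose proof (Ha j Hjk). pose proof (nodes_le (S i) j ltac:(lia) ltac:(lia)).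
    rewrite clamp_below by lra. ring.
Qed.

Lemma pl_interp_tail (s : R) : a k <= s -> pl_interp a t k s = t k - t O + (s - a k).
Proof.
  intros Hs. unfold pl_interp.
  rewrite (rsum_ext _ (fun j => t (S j) - t j)).
  - rewrite rsum_telescope, Rmax_left by lra. ring.
  - intros j Hj. pose proof (Ha j Hj). pose proof (nodes_le (S j) k ltac:(lia) ltac:(lia)).
    rewrite clamp_above by lra. field. lra.
Qed.

Lemma pl_interp_node (i : nat) : (i <= k)%nat -> pl_interp a t k (a i) = t i - t O.
Proof.
  intros Hi. destruct (Nat.eq_dec i k) as [->|Hne]; [rewrite pl_interp_tail; lra|].
  rewrite (pl_interp_on_piece i); [ring | lia |]. pose proof (Ha i ltac:(lia)). lra.
Qed.

Lemma piece_or_tail (s : R) : a O <= s ->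
  (exists i, (i < k)%nat /\ a i <= s <= a (S i)) \/ a k <= s.
Proof.
  intros Hs. induction k as [|m IH]; [right; auto|].
  destruct IH as [[i [Hi Hi2]]|Hm]; [intros; apply Ha; lia | left; exists i; split; [lia | auto] |].
  destruct (Rle_dec (a (S m)) s); [right; auto | left; exists m; split; [lia | lra]].
Qed.

Lemma clamp_increments_sum (s : R) : a O <= s ->
  rsum (fun j => clamp s (a j) (a (S j)) - a j) k + Rmax (s - a k) 0 = s - a O.
Proof.
  intros Hs.
  assert (H : forall m, (m <= k)%nat ->
            rsum (fun j => clamp s (a j) (a (S j)) - a j) m = clamp s (a O) (a m) - a O).
  { induction m as [|m IH]; intros Hmk; simpl.
    - unfold clamp, Rmin, Rmax. repeat destruct Rle_dec; lra.
    - rewrite IH by lia. pose proof (Ha m ltac:(lia)).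
      pose proof (nodes_le O m ltac:(lia) ltac:(lia)).
      unfold clamp, Rmin, Rmax. repeat destruct Rle_dec; lra. }
  rewrite H by lia. pose proof (nodes_le O k ltac:(lia) ltac:(lia)).
  unfold clamp, Rmin, Rmax. repeat destruct Rle_dec; lra.
Qed.

Lemma pl_interp_strict (s s' : R) : (forall j, (j < k)%nat -> t j < t (S j)) ->
  a O <= s -> s < s' -> pl_interp a t k s < pl_interp a t k s'.
Proof.
  intros Ht Hs Hss.
  set (slope := fun j => (t (S j) - t j) / (a (S j) - a j)).
  set (delta := fun j => clamp s' (a j) (a (S j)) - clamp s (a j) (a (S j))).
  assert (Hslope : forall j, (j < k)%nat -> 0 < slope j).
  { intros j Hj. pose proof (Ha j Hj). pose proof (Ht j Hj). apply Rdiv_lt_0_compat; lra. }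
  assert (Hdelta : forall j, (j < k)%nat -> 0 <= delta j).
  { intros j _. pose proof (clamp_monotone s s' (a j) (a (S j))). unfold delta. lra. }
  assert (Hsum : rsum delta k + (Rmax (s' - a k) 0 - Rmax (s - a k) 0) = s' - s).
  { pose proof (clamp_increments_sum s Hs). pose proof (clamp_increments_sum s' ltac:(lra)).
    rewrite (rsum_ext delta
               (fun j => (clamp s' (a j) (a (S j)) - a j) - (clamp s (a j) (a (S j)) - a j)))
      by (intros; unfold delta; ring).
    rewrite rsum_minus. lra. }
  assert (Hdiff : pl_interp a t k s' - pl_interp a t k s =
                  rsum (fun j => slope j * delta j) k + (Rmax (s' - a k) 0 - Rmax (s - a k) 0)).
  { unfold pl_interp.
    rewrite (rsum_ext (fun j => slope j * delta j)
               (fun j => (t (S j) - t j) / (a (S j) - a j) * (clamp s' (a j) (a (S j)) - a j)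
                         - (t (S j) - t j) / (a (S j) - a j) * (clamp s (a j) (a (S j)) - a j)))
      by (intros; unfold slope, delta; ring).
    rewrite rsum_minus. ring. }
  assert (Hmax : Rmax (s - a k) 0 <= Rmax (s' - a k) 0)
    by (unfold Rmax; repeat destruct Rle_dec; lra).
  destruct (Rlt_or_le 0 (rsum delta k)) as [Hpos|Hz].
  - pose proof (rsum_weighted_pos slope delta k Hslope Hdelta Hpos). lra.
  - pose proof (rsum_nonneg (fun j => slope j * delta j) k
                  (fun j Hj => Rmult_le_pos _ _ (Rlt_le _ _ (Hslope j Hj)) (Hdelta j Hj))).
    lra.
Qed.

End Interpolation.

Lemma pl_interp_time_change (a t : nat -> R) (k : nat) :
  a O = 0 -> t O = 0 ->
  (forall j, (j < k)%nat -> a j < a (S j)) -> (forall j, (j < k)%nat -> t j < t (S j)) ->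
  time_change (pl_interp a t k).
Proof.
  intros Ha0 Ht0 Ha Ht. split; [|split; [|split]].
  - pose proof (pl_interp_node a t k Ha O ltac:(lia)) as H0. rewrite Ha0 in H0. lra.
  - intros s s' Hs Hss. apply pl_interp_strict; auto; lra.
  - intros s _. apply pl_interp_continuity.
  - intros M. pose proof (nodes_le a k Ha O k ltac:(lia) ltac:(lia)).
    set (s := Rmax (a k) (M - t k + a k + 1)).
    assert (Hs1 : a k <= s) by apply Rmax_l.
    assert (Hs2 : M - t k + a k + 1 <= s) by apply Rmax_r.
    exists s. split; [lra|]. rewrite pl_interp_tail by auto. lra.
Qed.

Lemma pl_interp_near_id (a t : nat -> R) (k : nat) (th : R) :
  a O = 0 -> t O = 0 -> (forall j, (j < k)%nat -> a j < a (S j)) ->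
  (forall j, (j <= k)%nat -> Rabs (t j - a j) <= th) ->
  forall s, 0 <= s -> Rabs (pl_interp a t k s - s) <= th.
Proof.
  intros Ha0 Ht0 Ha Hth s Hs.
  destruct (piece_or_tail a k Ha s ltac:(lra)) as [[i [Hi Hpiece]]|Htail].
  - rewrite (pl_interp_on_piece a t k Ha i) by auto. rewrite Ht0.
    pose proof (Rabs_le_inv _ _ (Hth i ltac:(lia))).
    pose proof (Rabs_le_inv _ _ (Hth (S i) ltac:(lia))).
    pose proof (Ha i Hi).
    (* [s] is a convex combination of the two nodes, and the error at [s] is
       the same convex combination of the node errors *)
    set (al := (s - a i) / (a (S i) - a i)).
    assert (Hal : 0 <= al <= 1).
    { unfold al. split.
      - apply Rmult_le_pos; [lra | left; apply Rinv_0_lt_compat; lra].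
      - apply Rmult_le_reg_r with (a (S i) - a i); [lra|].
        unfold Rdiv. rewrite Rmult_assoc, Rinv_l by lra. lra. }
    replace (t i - 0 + (t (S i) - t i) / (a (S i) - a i) * (s - a i) - s)
      with ((1 - al) * (t i - a i) + al * (t (S i) - a (S i))) by (unfold al; field; lra).
    apply Rabs_le. nra.
  - rewrite pl_interp_tail by auto. rewrite Ht0.
    replace (t k - 0 + (s - a k) - s) with (t k - a k) by ring. auto.
Qed.

(** * The common time change *)

Lemma fold_right_Rmax_ge_init (l : list R) (a : R) : a <= fold_right Rmax a l.
Proof. induction l as [|z l IH]; simpl; [lra|]. eapply Rle_trans; [apply IH | apply Rmax_r]. Qed.

Lemma fold_right_Rmax_ge (l : list R) (a z : R) : In z l -> z <= fold_right Rmax a l.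
Proof.
  induction l as [|z' l IH]; simpl; [tauto|]. intros [->|Hz]; [apply Rmax_l|].
  eapply Rle_trans; [apply IH; auto | apply Rmax_r].
Qed.

Lemma fold_right_Rmax_le (l : list R) (a e : R) :
  a <= e -> (forall z, In z l -> z <= e) -> fold_right Rmax a l <= e.
Proof.
  induction l as [|z l IH]; simpl; intros Ha Hl; auto.
  apply Rmax_lub; [apply Hl; auto | apply IH; auto].
Qed.

(* Dominates the mesh of [pi_n] on each compact for large [n], since cells
   are weighted by [1 / (1 + t)], yet tends to 0. *)
Definition mesh_scale (p : partition_seq) (n : nat) : R :=
  fold_right Rmax (/ INR (S n))
    (map (fun j => Rmin (cell_len p n j) (/ (1 + pt p n j))) (seq 0 (pk p n))).

Lemma level_pos (k : nat) : 0 < / INR (S k).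
Proof. apply Rinv_0_lt_compat, lt_0_INR. lia. Qed.

Lemma level_anti (k k' : nat) : (k <= k')%nat -> / INR (S k') <= / INR (S k).
Proof. intros H. apply Rinv_le_contravar; [apply lt_0_INR; lia | apply le_INR; lia]. Qed.

Lemma level_below (eta : R) : 0 < eta -> exists k, / INR (S k) <= eta.
Proof.
  intros He. destruct (archimed_cor1 eta He) as [N [HN HN0]].
  exists (pred N). replace (S (pred N)) with N by lia. lra.
Qed.

Lemma mesh_scale_pos (p : partition_seq) (n : nat) : 0 < mesh_scale p n.
Proof. eapply Rlt_le_trans; [apply level_pos | apply fold_right_Rmax_ge_init]. Qed.

(* Jump sizes are discretised as [1 / (k + 1)] so that a largest one, of
   smallest [k], exists in every cell containing a jump. *)
Definition largest_jump_in_cell (p : partition_seq) (x y : R -> R) (n j : nat) (c : R) : Prop :=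
  pt p n j < c <= pt p n (S j) /\ exists k, left_jump x y (/ INR (S k)) c /\
    forall k' c', pt p n j < c' <= pt p n (S j) -> left_jump x y (/ INR (S k')) c' -> (k <= k')%nat.

Definition anchor (p : partition_seq) (x y : R -> R) (n j : nat) : R :=
  epsilon (inhabits 0) (largest_jump_in_cell p x y n j).

(* [common_lam] sends [node j] to [pt p n j].  In a fine enough cell the
   node is the largest left jump of [(x, y)] in it, if there is one. *)
Definition node (p : partition_seq) (x y : R -> R) (n j : nat) : R :=
  if Nat.eqb j 0 then 0 else
  if Nat.ltb j (pk p n) then
    (if excluded_middle_informative
          (cell_len p n j <= mesh_scale p n /\ largest_jump_in_cell p x y n j (anchor p x y n j))
     then anchor p x y n j
     else pt p n j + Rmin (mesh_scale p n) (cell_len p n j) / 2)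
  else pt p n (pk p n) + mesh_scale p n / 2.

Definition common_lam (p : partition_seq) (x y : R -> R) (n : nat) : R -> R :=
  pl_interp (node p x y n) (pt p n) (pk p n).

Lemma anchor_largest (p : partition_seq) (x y : R -> R) (n j : nat) (c : R) (k : nat) :
  pt p n j < c <= pt p n (S j) -> left_jump x y (/ INR (S k)) c ->
  largest_jump_in_cell p x y n j (anchor p x y n j).
Proof.
  intros Hc HJ. unfold anchor. apply epsilon_spec.
  set (P := fun k => exists c, pt p n j < c <= pt p n (S j) /\ left_jump x y (/ INR (S k)) c).
  destruct (dec_inh_nat_subset_has_unique_least_element P (fun k => classic (P k)))
    as [km [[[c' [Hc' HJ']] Hmin] _]]; [exists k, c; auto|].
  exists c'. split; auto. exists km. split; auto.
  intros k' c'' Hc'' HJ''. apply Hmin. exists c''. auto.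
Qed.

Section CommonTimeChange.

Variable p : partition_seq.
Hypothesis Hp : valid_partition_seq p.
Variables x y : R -> R.

Lemma mesh_scale_dominates (T : R) : 0 <= T -> exists N, forall n, (N <= n)%nat ->
  forall j, (j < pk p n)%nat -> pt p n j <= T -> cell_len p n j <= mesh_scale p n.
Proof.
  intros HT. destruct (mesh_vanishes p Hp T (/ (1 + T)) HT) as [N HN].
  { apply Rinv_0_lt_compat. lra. }
  exists N. intros n Hn j Hj HjT.
  pose proof (pt_nonneg p Hp n j ltac:(lia)).
  assert (Hw : / (1 + T) <= / (1 + pt p n j)) by (apply Rinv_le_contravar; lra).
  pose proof (HN n Hn j Hj HjT).
  rewrite <- (Rmin_left (cell_len p n j) (/ (1 + pt p n j))) by lra.
  apply fold_right_Rmax_ge. apply in_map_iff. exists j. split; [auto | apply in_seq; lia].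
Qed.

Lemma mesh_scale_vanishes (e : R) : 0 < e ->
  exists N, forall n, (N <= n)%nat -> mesh_scale p n <= e.
Proof.
  intros He. destruct (level_below e He) as [N0 HN0].
  destruct (mesh_vanishes p Hp (/ e) e ltac:(left; apply Rinv_0_lt_compat; lra) He) as [N1 HN1].
  exists (max N0 N1). intros n Hn. apply fold_right_Rmax_le.
  - eapply Rle_trans; [apply level_anti | apply HN0]. lia.
  - intros z Hz. apply in_map_iff in Hz. destruct Hz as [j [<- Hj]]. apply in_seq in Hj.
    destruct (Rle_dec (pt p n j) (/ e)).
    + eapply Rle_trans; [apply Rmin_l|]. left. apply HN1; auto; lia.
    + eapply Rle_trans; [apply Rmin_r|]. rewrite <- (Rinv_inv e) at 1.
      left. apply Rinv_lt_contravar; [|lra].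
      pose proof (Rinv_0_lt_compat e He). apply Rmult_lt_0_compat; lra.
Qed.

Lemma node_in_cell (n j : nat) : (1 <= j)%nat -> (j < pk p n)%nat ->
  pt p n j < node p x y n j <= pt p n (S j) /\ node p x y n j - pt p n j <= mesh_scale p n.
Proof.
  intros H1 H2. unfold node. destruct (Nat.eqb_spec j 0); [lia|].
  destruct (Nat.ltb_spec j (pk p n)); [|lia].
  pose proof (pt_step p Hp n j H2). pose proof (mesh_scale_pos p n). unfold cell_len in *.
  destruct excluded_middle_informative as [[Hs [Hc _]]|_]; [lra|].
  pose proof (Rmin_l (mesh_scale p n) (pt p n (S j) - pt p n j)).
  pose proof (Rmin_r (mesh_scale p n) (pt p n (S j) - pt p n j)).
  assert (0 < Rmin (mesh_scale p n) (pt p n (S j) - pt p n j)) by (apply Rmin_glb_lt; lra).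
  lra.
Qed.

Lemma node_last (n : nat) : (1 <= pk p n)%nat ->
  node p x y n (pk p n) = pt p n (pk p n) + mesh_scale p n / 2.
Proof.
  intros H. unfold node. destruct (Nat.eqb_spec (pk p n) 0); [lia|].
  destruct (Nat.ltb_spec (pk p n) (pk p n)); [lia | reflexivity].
Qed.

Lemma node_near_pt (n j : nat) : (j <= pk p n)%nat ->
  0 <= node p x y n j - pt p n j <= mesh_scale p n.
Proof.
  intros Hj. pose proof (mesh_scale_pos p n).
  destruct (Nat.eq_dec j 0) as [->|]; [change (node p x y n 0) with 0; rewrite (pt_0 p Hp); lra|].
  destruct (Nat.eq_dec j (pk p n)) as [->|]; [rewrite node_last by lia; lra|].
  destruct (node_in_cell n j); lia || lra.
Qed.

Lemma node_increasing (n j : nat) : (j < pk p n)%nat -> node p x y n j < node p x y n (S j).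
Proof.
  intros Hj. pose proof (mesh_scale_pos p n). pose proof (pt_step p Hp n j Hj).
  assert (Hle : node p x y n j <= pt p n (S j)).
  { destruct (Nat.eq_dec j 0) as [->|].
    { change (node p x y n 0) with 0. rewrite <- (pt_0 p Hp n). lra. }
    destruct (node_in_cell n j); lia || lra. }
  destruct (Nat.eq_dec (S j) (pk p n)) as [E|E].
  - rewrite E, node_last by lia. rewrite <- E. lra.
  - destruct (node_in_cell n (S j)); lia || lra.
Qed.

Lemma common_lam_skorokhod : skorokhod_seq (common_lam p x y).
Proof.
  split.
  - intros n. apply pl_interp_time_change; [reflexivity | apply (pt_0 p Hp) | |].
    + intros j Hj. apply node_increasing; auto.
    + intros j Hj. apply (pt_step p Hp); auto.
  - intros e He. destruct (mesh_scale_vanishes e He) as [N HN].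
    exists N. intros n Hn s Hs. eapply Rle_trans; [|apply (HN n Hn)].
    apply pl_interp_near_id; auto; [apply (pt_0 p Hp) | |].
    + intros j Hj. apply node_increasing; auto.
    + intros j Hj. pose proof (node_near_pt n j Hj). apply Rabs_le. lra.
Qed.

Hypotheses (Cx : cadlag x) (Cy : cadlag y).

(* Jumps of [(x, y)] of a given level are isolated, so a fine cell around a
   jump at [t0] contains no jump of that level but [t0]. *)
Lemma common_lam_snaps (t0 eta : R) : 0 < t0 -> 0 < eta -> left_jump x y eta t0 ->
  snaps_to_cell_start p (common_lam p x y) t0.
Proof.
  intros Ht He HJ.
  destruct (level_below eta He) as [ks Hks].
  assert (HJs : left_jump x y (/ INR (S ks)) t0) by (eapply left_jump_anti; eauto).
  destruct (left_jump_isolated x y t0 (/ INR (S ks)) Cx Cy Ht (level_pos ks)) as [d [Hd Hiso]].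
  destruct (pt_last_eventually_gt p Hp t0) as [N1 HN1].
  destruct (mesh_vanishes p Hp t0 (Rmin d t0) ltac:(lra)) as [N2 HN2]; [apply Rmin_glb_lt; lra|].
  destruct (mesh_scale_dominates t0 ltac:(lra)) as [N3 HN3].
  exists (max N1 (max N2 N3)). intros n Hn.
  destruct (cell_exists p Hp n t0 Ht) as [j [Hj Hcell]]; [left; apply HN1; lia|].
  exists j. split; [auto | split; [auto|]].
  assert (Hsz : cell_len p n j < Rmin d t0) by (apply HN2; [lia | auto | lra]).
  pose proof (Rmin_l d t0). pose proof (Rmin_r d t0). unfold cell_len in Hsz.
  assert (Hj1 : (1 <= j)%nat) by (destruct j; [rewrite (pt_0 p Hp) in *; lra | lia]).
  assert (Hsc : cell_len p n j <= mesh_scale p n) by (apply HN3; [lia | auto | lra]).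
  assert (Hlj := anchor_largest p x y n j t0 ks Hcell HJs).
  assert (Hanchor : anchor p x y n j = t0).
  { destruct Hlj as [Hin [k [HJk Hmin]]].
    assert (Hk : (k <= ks)%nat) by (apply (Hmin ks t0); auto).
    apply NNPP. intros Hne. apply (Hiso (anchor p x y n j)); auto.
    - apply Rabs_def1; lra.
    - eapply left_jump_anti; [apply HJk | apply level_anti; auto]. }
  assert (Hnode : node p x y n j = t0).
  { unfold node. destruct (Nat.eqb_spec j 0); [lia|]. destruct (Nat.ltb_spec j (pk p n)); [|lia].
    destruct excluded_middle_informative as [_|Hno]; [auto|].
    exfalso. apply Hno. rewrite Hanchor in *. auto. }
  unfold common_lam. rewrite <- Hnode, pl_interp_node, (pt_0 p Hp); [ring | | lia].
  intros i Hi. apply node_increasing; auto.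
Qed.

End CommonTimeChange.

Lemma qn_common_time_change (p : partition_seq) (x y : R -> R) :
  valid_partition_seq p -> cadlag x -> cadlag y ->
  exists lam, skorokhod_seq lam /\ forall f g u, cadlag f -> cadlag g ->
    (forall t, 0 < t -> left_continuous x t -> left_continuous y t ->
       left_continuous f t /\ left_continuous g t) ->
    J1_converges (qn p f g) u -> converges_along lam (qn p f g) u.
Proof.
  intros Hp Cx Cy. pose proof (common_lam_skorokhod p Hp x y) as Hlam.
  exists (common_lam p x y). split; [exact Hlam|].
  intros f g u Cf Cg Hlc. apply (converges_along_of_J1 p); auto.
  intros t Ht HnLC. destruct (not_left_continuous_left_jump x y t) as [eta [Heta HJt]].
  - intros [Hx Hy]. apply HnLC. auto.
  - apply (common_lam_snaps p Hp x y Cx Cy t eta); auto.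
Qed.

Theorem proposition3p4 (p : partition_seq) (x y : R -> R) :
  valid_partition_seq p ->
  in_Q p x -> in_Q p y ->
  ((exists L, J1_converges (qn p (fun t => x t + y t) (fun t => x t + y t)) L) <->
   (exists M, J1_converges (qn p x y) M)) /\
  (forall M, J1_converges (qn p x y) M ->
     in_Q p (fun t => x t + y t) /\
     forall Lxy Lx Ly,
       J1_converges (qn p (fun t => x t + y t) (fun t => x t + y t)) Lxy ->
       J1_converges (qn p x x) Lx ->
       J1_converges (qn p y y) Ly ->
       forall t, 0 <= t -> M t = (Lxy t - Lx t - Ly t) / 2).
Proof.
  intros Hp [Cx [Lx0 HLx0]] [Cy [Ly0 HLy0]].
  set (s := fun t => x t + y t).
  assert (Cs : cadlag s) by (apply (cadlag_lincomb 1 1 x y); auto; intros; unfold s; ring).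
  assert (Hcl : forall U u, J1_converges U u -> cadlag u) by (intros U u [Cu _]; exact Cu).
  destruct (qn_common_time_change p x y Hp Cx Cy) as [lam [Hlam Halong]].
  pose proof (fun L => Halong x x L Cx Cx (fun _ _ Hx _ => conj Hx Hx)) as Axx.
  pose proof (fun L => Halong y y L Cy Cy (fun _ _ _ Hy => conj Hy Hy)) as Ayy.
  pose proof (fun L => Halong x y L Cx Cy (fun _ _ Hx Hy => conj Hx Hy)) as Axy.
  assert (Hlc : forall t, left_continuous x t -> left_continuous y t -> left_continuous s t)
    by (intros; apply left_continuous_plus; auto).
  pose proof (fun L => Halong s s L Cs Cs (fun t _ Hx Hy => conj (Hlc t Hx Hy) (Hlc t Hx Hy)))
    as Ass.
  assert (Hsum : forall Lx Ly M, J1_converges (qn p x x) Lx -> J1_converges (qn p y y) Ly ->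
            J1_converges (qn p x y) M ->
            converges_along lam (qn p s s) (fun t => 1 * Lx t + 1 * Ly t + 2 * M t)).
  { intros. apply (converges_along_lincomb3 lam (qn p x x) (qn p y y) (qn p x y)); auto.
    intros; unfold s; rewrite qn_polarization; ring. }
  assert (HJsum : forall M, J1_converges (qn p x y) M ->
            J1_converges (qn p s s) (fun t => 1 * Lx0 t + 1 * Ly0 t + 2 * M t)).
  { intros M HM. apply J1_converges_along.
    split; [apply cadlag_lincomb3; eauto | exists lam; auto]. }
  split; [split|].
  - intros [L HL]. exists (fun t => / 2 * L t + - / 2 * Lx0 t + - / 2 * Ly0 t).
    apply J1_converges_along. split; [apply cadlag_lincomb3; eauto | exists lam; split; auto].
    apply (converges_along_lincomb3 lam (qn p s s) (qn p x x) (qn p y y)); auto.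
    intros n t. unfold s. rewrite qn_polarization. field.
  - intros [M HM]. eauto.
  - intros M HM. split; [split; eauto|].
    intros Lxy Lx Ly HLxy HLx HLy t Ht.
    pose proof (converges_along_unique lam _ _ _ (Ass Lxy HLxy) (Hsum Lx Ly M HLx HLy HM) t Ht).
    lra.
Qed.
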